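(* Let $\mathcal X=\{1,\ldots,n\}$ be the vertex set of a directed graph with edge energies $U_{ij}\in[0,+\infty]$ (with $U_{ij}=+\infty$ allowed for absent links), and let $B=[b_{ij}]$, $b_{ij}=\exp(-U_{ij})$ (with $\exp(-\infty)=0$). Let $N\ge1$ be such that all entries of $B^N$ are positive, let $\lambda_B$ be the spectral radius of $B$, and let $u,v$ be vectors with positive entries such that $B^Tu=\lambda_Bu$, $Bv=\lambda_Bv$, $\sum_iu_iv_i=1$. Set $\mu_U(i)=u_iv_i$, $R_U=\lambda_B^{-1}\operatorname{diag}(v)^{-1}B\operatorname{diag}(v)$ with entries $(R_U)_{ij}$, and $\mathfrak M_U(x_0,\ldots,x_N)=\mu_U(x_0)(R_U)_{x_0x_1}\cdots(R_U)_{x_{N-1}x_N}$. Let $\mathfrak M^*_U[\delta_1,\delta_n]$ be the minimizer of $\mathbb D(P\|\mathfrak M_U)$ over all probability distributions $P$ on $\mathcal X^{N+1}$ whose marginal at time $0$ is the point mass at node $1$ and whose marginal at time $N$ is the point mass at node $n$. For a path $x=(x_0,\ldots,x_N)$ define its cost $\sum_{t=0}^{N-1}U_{x_tx_{t+1}}$. Then $\mathfrak M^*_U[\delta_1,\delta_n]$ assigns equal probability to any two paths $x\in\mathcal X^{N+1}$ with $x_0=1$, $x_N=n$ having equal cost; in particular, it assigns maximum and equal probability to the minimum-cost paths from $1$ to $n$ of length $N$.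
   Context: Relative entropy of a probability distribution $P$ with respect to a nonnegative measure $Q$ on a finite set: $\mathbb D(P\|Q)=\sum_x P(x)\log\frac{P(x)}{Q(x)}$ if $\mathrm{supp}(P)\subseteq\mathrm{supp}(Q)$ (with $0\log0=0$), and $+\infty$ otherwise. *)

From HB Require Import structures.
From mathcomp Require Import all_boot all_order all_algebra.
From mathcomp Require Import complex.
From mathcomp Require Import all_classical all_reals all_analysis.
Set Implicit Arguments. Unset Strict Implicit. Unset Printing Implicit Defensive.
Import Order.TTheory GRing.Theory Num.Theory.
Local Open Scope ring_scope.
Local Open Scope complex_scope.

Section Defs.
Variable R : realType.

Definition spectral_radius (k : nat) (A : 'M[R]_k) : R :=
  sup [set r : R | exists z : R[i],
        eigenvalue (map_mx (fun a : R => a%:C) A) z /\ `|z| = r%:C].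

Definition Bmat (k : nat) (U : 'I_k -> 'I_k -> \bar R) : 'M[R]_k :=
  \matrix_(i, j) fine (expeR (- U i j)%E).

Definition path_t (k N : nat) := {ffun 'I_N.+1 -> 'I_k}.

Definition marginal (k N : nat) (P : path_t k N -> R) (t : 'I_N.+1) (i : 'I_k) : R :=
  \sum_(x : path_t k N | x t == i) P x.

Definition is_distribution (T : finType) (P : T -> R) :=
  (forall x, 0 <= P x) /\ \sum_x P x = 1.

Definition relent (T : finType) (P Q : T -> R) : \bar R :=
  if [forall x, (P x != 0) ==> (Q x != 0)] then
    (\sum_x (if P x == 0 then 0 else P x * ln (P x / Q x)))%:E
  else +oo%E.

Definition path_measure (k N : nat) (mu : 'I_k -> R) (RU : 'M[R]_k)
  (x : path_t k N) : R :=
  mu (x ord0) * \prod_(0 <= t < N) RU (x (inord t)) (x (inord t.+1)).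

Definition path_cost (k N : nat) (U : 'I_k -> 'I_k -> \bar R) (x : path_t k N)
  : \bar R := (\sum_(0 <= t < N) U (x (inord t)) (x (inord t.+1)))%E.

Definition muU (k : nat) (u v : 'cV[R]_k) (i : 'I_k) : R := u i 0 * v i 0.

Definition RU (k : nat) (B : 'M[R]_k) (lam : R) (v : 'cV[R]_k) : 'M[R]_k :=
  lam^-1 *: (invmx (diag_mx v^T) *m B *m diag_mx v^T).

End Defs.

From HB Require Import structures.
From mathcomp Require Import all_boot all_order all_algebra.
From mathcomp Require Import complex.
From mathcomp Require Import all_classical all_reals all_analysis.
From mathcomp Require Import ring lra.
Set Implicit Arguments. Unset Strict Implicit. Unset Printing Implicit Defensive.
Import Order.TTheory GRing.Theory Num.Theory.
Local Open Scope ring_scope.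

(* On the paths from 1 to n the conjugation by diag(v) in R_U telescopes, so
   M_U(x) = u_1 v_n lam^-N exp(-cost x) there.  Conditioning M_U on these paths
   gives a feasible distribution Q with D(Q || M_U) = -ln Z, Z being the M_U-mass
   of the paths from 1 to n, and every feasible P satisfies
   D(P || M_U) = D(P || Q) - ln Z.  By Gibbs' inequality the minimizer is Q
   itself, whose weights are a decreasing function of the cost. *)

Section Gibbs.
Variable R : realType.

Lemma sub_le_mul_ln_div (p q : R) : 0 < p -> 0 < q -> p - q <= p * ln (p / q).
Proof.
move=> p_gt0 q_gt0; have qp_gt0 : 0 < q / p by rewrite divr_gt0.
have := expR_ge1Dx (ln (q / p)); rewrite lnK ?posrE //.
have -> : ln (p / q) = - ln (q / p) by rewrite -lnV ?posrE // invf_div.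
have : p * (q / p) = q by rewrite mulrC divfK // gt_eqF.
nra.
Qed.

Lemma mul_ln_div_eq_sub (p q : R) : 0 < p -> 0 < q ->
  p * ln (p / q) = p - q -> p = q.
Proof.
move=> p_gt0 q_gt0; have qp_gt0 : 0 < q / p by rewrite divr_gt0.
have pqp : p * (q / p) = q by rewrite mulrC divfK // gt_eqF.
have [qp1 _|qp_neq1] := eqVneq (q / p) 1; first by rewrite -pqp qp1 mulr1.
have ln_neq0 : ln (q / p) != 0.
  by apply: contra qp_neq1 => /eqP ln0; rewrite -[q / p]lnK ?posrE // ln0 expR0.
have := expR_gt1Dx ln_neq0; rewrite lnK ?posrE //.
have -> : ln (p / q) = - ln (q / p) by rewrite -lnV ?posrE // invf_div.
nra.
Qed.

Lemma gibbs_eq (T : finType) (P Q : T -> R) :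
  (forall x, 0 <= P x) -> (forall x, 0 <= Q x) ->
  \sum_x P x = 1 -> \sum_x Q x = 1 -> (forall x, P x != 0 -> 0 < Q x) ->
  \sum_x (if P x == 0 then 0 else P x * ln (P x / Q x)) <= 0 ->
  P =1 Q.
Proof.
move=> P_ge0 Q_ge0 P1 Q1 PQ D_le0.
pose g x := (if P x == 0 then 0 else P x * ln (P x / Q x)) - P x + Q x.
have g_ge0 x : 0 <= g x.
  rewrite /g; case: eqP => [->|/eqP P_neq0]; first by rewrite subr0 add0r.
  have P_gt0 : 0 < P x by rewrite lt_def P_neq0 P_ge0.
  by have := sub_le_mul_ln_div P_gt0 (PQ x P_neq0); lra.
have g0 : \sum_x g x = 0.
  apply/eqP; rewrite eq_le sumr_ge0 // andbT.
  by rewrite /g !big_split /= sumrN P1 Q1; lra.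
move=> x; have := psumr_eq0P (fun y _ => g_ge0 y) g0 (i := x) isT.
rewrite /g; case: eqP => [->|/eqP P_neq0]; first by rewrite subr0 add0r.
move=> gx0; apply: mul_ln_div_eq_sub; last by lra.
  by rewrite lt_def P_neq0 P_ge0.
exact: PQ.
Qed.

End Gibbs.

Section ConditionedMeasure.
Variables (R : realType) (T : finType) (M : T -> R) (S : pred T).

Definition cond_measure (x : T) : R :=
  if S x then M x / \sum_(y | S y) M y else 0.

Hypothesis M_ge0 : forall x, 0 <= M x.
Hypothesis mass_gt0 : 0 < \sum_(y | S y) M y.

Lemma cond_measure_ge0 x : 0 <= cond_measure x.
Proof. by rewrite /cond_measure; case: ifP => // _; rewrite divr_ge0 // ltW. Qed.

Lemma sum_cond_measure : \sum_x cond_measure x = 1.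
Proof. by rewrite -big_mkcond /= -mulr_suml mulfV // gt_eqF. Qed.

Lemma cond_measure_supp x : cond_measure x != 0 -> S x.
Proof. by rewrite /cond_measure; case: ifP; rewrite ?eqxx. Qed.

Lemma relent_cond_measure :
  relent cond_measure M = (- ln (\sum_(y | S y) M y))%:E.
Proof.
set Z := \sum_(y | S y) M y.
have M_neq0 x : cond_measure x != 0 -> M x != 0.
  by rewrite /cond_measure; case: ifP; rewrite ?eqxx // mulf_eq0 negb_or => _ /andP[].
rewrite /relent; have -> : [forall x, (cond_measure x != 0) ==> (M x != 0)].
  by apply/forallP => x; apply/implyP; exact: M_neq0.
congr EFin; rewrite (eq_bigr (fun x => cond_measure x * - ln Z)).
  by rewrite -mulr_suml sum_cond_measure mul1r.
move=> x _; case: eqP => [->|/eqP Q_neq0]; first by rewrite mul0r.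
have Mx_neq0 := M_neq0 x Q_neq0.
have -> : cond_measure x / M x = Z^-1.
  by rewrite /cond_measure (cond_measure_supp Q_neq0) mulrAC divff ?mul1r.
by rewrite lnV ?posrE // mulrN.
Qed.

(* For P living on S, D(P || M) = D(P || cond_measure) - ln Z. *)
Lemma relent_cond_measure_min (P : T -> R) :
  is_distribution P -> (forall x, P x != 0 -> S x) ->
  (relent P M <= relent cond_measure M)%E -> P =1 cond_measure.
Proof.
move=> [P_ge0 P1] P_supp; set Z := \sum_(y | S y) M y.
rewrite relent_cond_measure /relent; case: ifP => [/forallP PM|_]; last first.
  by rewrite leye_eq.
rewrite lee_fin => D_le.
have Q_gt0 x : P x != 0 -> 0 < cond_measure x.
  move=> P_neq0; rewrite /cond_measure P_supp // divr_gt0 //.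
  by rewrite lt_def M_ge0 andbT; exact: (implyP (PM x)).
apply: gibbs_eq => //; [exact: cond_measure_ge0 | exact: sum_cond_measure |].
have shift x : (if P x == 0 then 0 else P x * ln (P x / M x)) =
    (if P x == 0 then 0 else P x * ln (P x / cond_measure x)) - P x * ln Z.
  case: eqP => [->|/eqP P_neq0]; first by rewrite mul0r subr0.
  have Mx_neq0 : M x != 0 := implyP (PM x) P_neq0.
  have P_gt0 : 0 < P x by rewrite lt_def P_neq0 P_ge0.
  have PQ_gt0 : 0 < P x / cond_measure x by rewrite divr_gt0 ?Q_gt0.
  have -> : P x / M x = P x / cond_measure x * Z^-1.
    by rewrite /cond_measure P_supp // -/Z; field; rewrite Mx_neq0 gt_eqF.
  by rewrite lnM ?posrE ?invr_gt0 // lnV ?posrE //; ring.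
by move: D_le; rewrite (eq_bigr _ (fun x _ => shift x)) sumrB -mulr_suml P1 mul1r; lra.
Qed.

End ConditionedMeasure.

Section PathMarginals.
Variables (R : realType) (k N : nat) (Q : path_t k N -> R) (t : 'I_N.+1) (i0 : 'I_k).

Lemma marginal_delta_supp : (forall x, 0 <= Q x) ->
  (forall i, marginal Q t i = (i == i0)%:R) ->
  forall x : path_t k N, x t != i0 -> Q x = 0.
Proof.
move=> Q_ge0 Qt x xt_neq; have := Qt (x t); rewrite (negbTE xt_neq) /marginal.
by move=> /(psumr_eq0P (fun y _ => Q_ge0 y)); apply.
Qed.

Lemma marginal_delta : (forall x : path_t k N, x t != i0 -> Q x = 0) ->
  \sum_x Q x = 1 -> forall i, marginal Q t i = (i == i0)%:R.
Proof.
move=> Q_supp Q1 i; rewrite /marginal; have [->|i_neq] := eqVneq i i0.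
  rewrite -Q1 [RHS](bigID (fun x : path_t k N => x t == i0)) /=.
  by rewrite [X in _ = _ + X]big1 ?addr0.
by rewrite big1 // => x /eqP xt; apply: Q_supp; rewrite xt.
Qed.

End PathMarginals.

Section MatrixWalks.
Variable R : realType.

Lemma sumr_gt0_exists (I : finType) (F : I -> R) : 0 < \sum_i F i -> exists i, 0 < F i.
Proof.
case: (pickP (fun i => 0 < F i)) => [i Fi_gt0 _|F_le0]; first by exists i.
by rewrite ltNge sumr_le0 // => i _; rewrite leNgt F_le0.
Qed.

Lemma mxpow_gt0_walk (k : nat) (B : 'M[R]_k.+1) : (forall i j, 0 <= B i j) ->
  forall n i j, 0 < (B ^+ n) i j -> exists f : nat -> 'I_k.+1,
  [/\ f 0%N = i, f n = j & 0 < \prod_(0 <= t < n) B (f t) (f t.+1)].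
Proof.
move=> B_ge0; elim=> [|n IHn] i j.
  rewrite expr0 mxE; case: eqP => [<- _|]; last by rewrite ltxx.
  by exists (fun=> i); rewrite big_geq.
rewrite exprSr mxE => /sumr_gt0_exists[l Bnl_gt0].
have Blj_gt0 : 0 < B l j.
  by rewrite lt_def B_ge0 andbT; apply: contraTneq Bnl_gt0 => ->; rewrite mulr0 ltxx.
have Bn_gt0 : 0 < (B ^+ n) i l by rewrite -(pmulr_lgt0 _ Blj_gt0).
have [f [f0 fn f_gt0]] := IHn i l Bn_gt0.
exists (fun t => if t == n.+1 then j else f t); split => //; first by rewrite eqxx.
rewrite big_nat_recr //= eqxx ifN ?neq_ltn ?ltnSn // fn mulr_gt0 //.
rewrite (eq_big_nat _ _ (F2 := fun t => B (f t) (f t.+1))) // => t /andP[_ tn].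
by rewrite !ifN // neq_ltn ?ltnS ?tn ?(ltnW tn).
Qed.

Lemma mxpow_gt0_path (k N : nat) (B : 'M[R]_k.+1) : (forall i j, 0 <= B i j) ->
  forall i j, 0 < (B ^+ N) i j -> exists x : path_t k.+1 N,
  [/\ x ord0 = i, x ord_max = j &
      0 < \prod_(0 <= t < N) B (x (inord t)) (x (inord t.+1))].
Proof.
move=> B_ge0 i j /(mxpow_gt0_walk B_ge0)[f [f0 fN f_gt0]].
exists [ffun t : 'I_N.+1 => f t]; rewrite !ffunE; split => //.
rewrite (eq_big_nat _ _ (F2 := fun t => B (f t) (f t.+1))) // => t /andP[_ tN].
by rewrite !ffunE /= !inordK // ltnS ?tN // ltnW.
Qed.

End MatrixWalks.

Section ConjugatedChain.
Variables (R : realType) (k : nat) (B : 'M[R]_k) (lam : R) (v : 'cV[R]_k).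
Hypothesis v_gt0 : forall i, 0 < v i 0.

Lemma RU_mxE i j : RU B lam v i j = lam^-1 * ((v i 0)^-1 * B i j * v j 0).
Proof.
rewrite /RU; set D := diag_mx v^T; set Dinv := diag_mx (\row_i (v i 0)^-1).
have D_Dinv : D *m Dinv = 1%:M.
  apply/matrixP => a b; rewrite mul_diag_mx !mxE.
  have [->|] := eqVneq a b; last by rewrite mulr0n mulr0.
  by rewrite mulr1n mulfV // gt_eqF.
have D_unit : D \in unitmx by case: (mulmx1_unit D_Dinv).
have -> : invmx D = Dinv by rewrite -[invmx D]mulmx1 -D_Dinv mulmxA mulVmx // mul1mx.
by rewrite mxE mul_mx_diag mxE mul_diag_mx !mxE mulrA.
Qed.

Lemma prod_RU_telescope (f : nat -> 'I_k) n :
  \prod_(0 <= t < n) RU B lam v (f t) (f t.+1) =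
  lam^-1 ^+ n * ((v (f 0%N) 0)^-1 * v (f n) 0) * \prod_(0 <= t < n) B (f t) (f t.+1).
Proof.
elim: n => [|n IHn]; first by rewrite !big_geq // expr0 mulVf ?mulr1 ?gt_eqF.
rewrite !big_nat_recr //= IHn RU_mxE exprSr; move: lam^-1 => a.
by field; rewrite !gt_eqF.
Qed.

Lemma path_measure_RU N (u : 'cV[R]_k) (x : path_t k N) :
  path_measure (muU u v) (RU B lam v) x = u (x ord0) 0 * v (x ord_max) 0 *
    lam^-1 ^+ N * \prod_(0 <= t < N) B (x (inord t)) (x (inord t.+1)).
Proof.
have inord0 : inord 0 = ord0 :> 'I_N.+1 by apply/val_inj; rewrite /= inordK.
have inordN : inord N = ord_max :> 'I_N.+1 by apply/val_inj; rewrite /= inordK.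
rewrite /path_measure /muU (prod_RU_telescope (fun t => x (inord t))) /= inord0 inordN.
by field; rewrite gt_eqF.
Qed.

End ConjugatedChain.

Lemma nonneg_mx_eigenvalue_gt0 (R : realType) (k N : nat) (B : 'M[R]_k.+1)
    (lam : R) (v : 'cV[R]_k.+1) i j :
  (forall i j, 0 <= B i j) -> (0 < N)%N -> 0 < (B ^+ N) i j ->
  (forall i, 0 < v i 0) -> B *m v = lam *: v -> 0 < lam.
Proof.
move=> B_ge0 N_gt0 BN_gt0 v_gt0 Bv.
have row_eq l : \sum_j B l j * v j 0 = lam * v l 0.
  by have := congr1 (fun A : 'cV_k.+1 => A l 0) Bv; rewrite !mxE.
have lam_ge0 : 0 <= lam.
  rewrite -(pmulr_lge0 _ (v_gt0 ord0)) -row_eq.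
  by apply: sumr_ge0 => l _; exact: mulr_ge0 (B_ge0 _ _) (ltW (v_gt0 _)).
rewrite lt_def lam_ge0 andbT; apply: contraTneq BN_gt0 => lam0.
have -> : B = 0.
  apply/matrixP => l j'; have := row_eq l; rewrite lam0 mul0r.
  move/(psumr_eq0P (fun j _ => mulr_ge0 (B_ge0 l j) (ltW (v_gt0 j)))).
  by move/(_ j' isT)/eqP; rewrite mulf_eq0 (gt_eqF (v_gt0 j')) orbF mxE => /eqP.
by rewrite expr0n eqn0Ngt N_gt0 /= mxE ltxx.
Qed.

Section EdgeEnergies.
Variable R : realType.
Local Open Scope ereal_scope.

Lemma fin_num_expeRN (x : \bar R) : 0 <= x -> expeR (- x) \is a fin_num.
Proof.
move=> x_ge0; rewrite ge0_fin_numE ?expeR_ge0 // (@le_lt_trans _ _ 1) ?ltey //.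
by rewrite -expeR0 lee_expeR leeNl oppe0.
Qed.

Lemma fine_expeRN_le (a b : \bar R) : 0 <= a -> a <= b ->
  (fine (expeR (- b)) <= fine (expeR (- a)))%R.
Proof.
move=> a_ge0 ab; apply: fine_le; rewrite ?fin_num_expeRN ?(le_trans a_ge0) //.
by rewrite lee_expeR leeN2.
Qed.

Lemma prod_fine_expeRN (a : nat -> \bar R) n : (forall t, 0 <= a t) ->
  (\prod_(0 <= t < n) fine (expeR (- a t)))%R = fine (expeR (- \sum_(0 <= t < n) a t)).
Proof.
move=> a_ge0; elim: n => [|n IHn]; first by rewrite !big_geq // oppe0 expeR0.
have sum_ge0 : 0 <= \sum_(0 <= t < n) a t by rewrite sume_ge0.
rewrite !big_nat_recr //= IHn oppeD ?ge0_adde_def ?inE //.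
by rewrite expeRD fineM // fin_num_expeRN.
Qed.

Lemma path_cost_ge0 (k N : nat) (U : 'I_k -> 'I_k -> \bar R) (x : path_t k N) :
  (forall i j, 0 <= U i j) -> 0 <= path_cost U x.
Proof. by move=> U_ge0; rewrite sume_ge0. Qed.

Lemma prod_Bmat_path (k N : nat) (U : 'I_k -> 'I_k -> \bar R) (x : path_t k N) :
  (forall i j, 0 <= U i j) ->
  (\prod_(0 <= t < N) Bmat U (x (inord t)) (x (inord t.+1)))%R =
  fine (expeR (- path_cost U x)).
Proof.
move=> U_ge0; rewrite /path_cost -prod_fine_expeRN //.
by apply: eq_bigr => t _; rewrite mxE.
Qed.

Lemma path_measure_cost (k N : nat) (U : 'I_k -> 'I_k -> \bar R) (lam : R)
    (u v : 'cV[R]_k) (x : path_t k N) :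
  (forall i j, 0 <= U i j) -> (forall i, (0 < v i 0)%R) ->
  path_measure (muU u v) (RU (Bmat U) lam v) x =
  (u (x ord0) 0 * v (x ord_max) 0 * lam^-1 ^+ N * fine (expeR (- path_cost U x)))%R.
Proof.
by move=> U_ge0 v_gt0; rewrite path_measure_RU // prod_Bmat_path.
Qed.

Lemma path_measure_ge0 (k N : nat) (U : 'I_k -> 'I_k -> \bar R) (lam : R)
    (u v : 'cV[R]_k) (x : path_t k N) :
  (forall i j, 0 <= U i j) -> (forall i, (0 < u i 0)%R) -> (forall i, (0 < v i 0)%R) ->
  (0 < lam)%R -> (0 <= path_measure (muU u v) (RU (Bmat U) lam v) x)%R.
Proof.
move=> U_ge0 u_gt0 v_gt0 lam_gt0.
rewrite path_measure_cost // mulr_ge0 ?fine_ge0 ?expeR_ge0 //.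
by rewrite !mulr_ge0 ?exprn_ge0 ?invr_ge0 ?ltW.
Qed.

End EdgeEnergies.

(* Vertex set {1,...,n} is modelled as 'I_m.+1 (n = m+1); node 1 is ord0 and
   node n is ord_max. *)
Theorem theorem6p1 (R : realType) (m N : nat)
  (U : 'I_m.+1 -> 'I_m.+1 -> \bar R)
  (hU : forall i j, (0 <= U i j)%E)
  (hN : (1 <= N)%N)
  (hprim : forall i j, 0 < (Bmat U ^+ N) i j)
  (lam : R) (hlam : lam = spectral_radius (Bmat U))
  (u v : 'cV[R]_m.+1)
  (hu : forall i, 0 < u i 0) (hv : forall i, 0 < v i 0)
  (hBu : (Bmat U)^T *m u = lam *: u)
  (hBv : Bmat U *m v = lam *: v)
  (huv : \sum_i u i 0 * v i 0 = 1)
  (P : path_t m.+1 N -> R)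
  (hP : is_distribution P)
  (hP0 : forall i, marginal P ord0 i = (i == ord0)%:R)
  (hPN : forall i, marginal P ord_max i = (i == ord_max)%:R)
  (hmin : forall Q : path_t m.+1 N -> R, is_distribution Q ->
      (forall i, marginal Q ord0 i = (i == ord0)%:R) ->
      (forall i, marginal Q ord_max i = (i == ord_max)%:R) ->
      (relent P (path_measure (muU u v) (RU (Bmat U) lam v)) <=
       relent Q (path_measure (muU u v) (RU (Bmat U) lam v)))%E) :
  (forall x y : path_t m.+1 N,
      x ord0 = ord0 -> x ord_max = ord_max ->
      y ord0 = ord0 -> y ord_max = ord_max ->
      path_cost U x = path_cost U y -> P x = P y) /\
  (forall x : path_t m.+1 N,
      x ord0 = ord0 -> x ord_max = ord_max ->
      (forall y : path_t m.+1 N, y ord0 = ord0 -> y ord_max = ord_max ->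
          (path_cost U x <= path_cost U y)%E) ->
      forall y : path_t m.+1 N, P y <= P x).
Proof.
set B := Bmat U; set M := @path_measure R m.+1 N (muU u v) (RU B lam v).
have B_ge0 i j : 0 <= B i j by rewrite mxE fine_ge0 ?expeR_ge0.
have lam_gt0 := nonneg_mx_eigenvalue_gt0 B_ge0 hN (hprim ord0 ord0) hv hBv.
pose S (x : path_t m.+1 N) := (x ord0 == ord0) && (x ord_max == ord_max).
pose c := u ord0 0 * v ord_max 0 * lam^-1 ^+ N.
have c_gt0 : 0 < c by rewrite !mulr_gt0 ?exprn_gt0 ?invr_gt0.
have M_S x : S x -> M x = c * fine (expeR (- path_cost U x)).
  by case/andP=> /eqP x0 /eqP xN; rewrite /M /B path_measure_cost // x0 xN.
have M_ge0 x : 0 <= M x by exact: path_measure_ge0.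
have mass_gt0 : 0 < \sum_(x | S x) M x.
  have [x [x0 xN Wx_gt0]] := mxpow_gt0_path B_ge0 (hprim ord0 ord_max).
  have Sx : S x by rewrite /S x0 xN !eqxx.
  rewrite (bigD1 x) //= ltr_pwDl ?sumr_ge0 // M_S // mulr_gt0 //.
  by rewrite -prod_Bmat_path.
set Z := \sum_(x | S x) M x.
have Q_S x : ~~ S x -> cond_measure M S x = 0 by rewrite /cond_measure => /negbTE ->.
have Q1 := sum_cond_measure mass_gt0.
have [P_ge0 _] := hP.
have P_cond : P =1 cond_measure M S.
  apply: relent_cond_measure_min => //.
    move=> x; apply: contraR => /nandP[] /marginal_delta_supp -> //; rewrite eqxx.
  apply: hmin; first by split; [exact: cond_measure_ge0 | exact: Q1].
    by apply: marginal_delta Q1 => x x0; rewrite Q_S // negb_and x0.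
  by apply: marginal_delta Q1 => x xN; rewrite Q_S // negb_and xN orbT.
have P_S x : S x -> P x = c / Z * fine (expeR (- path_cost U x)).
  by move=> Sx; rewrite P_cond /cond_measure Sx M_S // mulrAC.
have c_Z_gt0 : 0 < c / Z by rewrite divr_gt0.
split=> [x y x0 xN y0 yN cost_xy|x x0 xN x_min y].
  by rewrite !P_S ?cost_xy // /S ?x0 ?xN ?y0 ?yN !eqxx.
have Sx : S x by rewrite /S x0 xN !eqxx.
have [Sy|nSy] := boolP (S y); last by rewrite (P_cond y) Q_S.
rewrite !P_S // ler_pM2l // fine_expeRN_le ?path_cost_ge0 //.
by case/andP: Sy => /eqP y0 /eqP yN; exact: x_min.
Qed.
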